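(* Fix an arbitrary integer load vector $x^{(0)}$ with discrepancy at most $K$, and a sequence of matchings. Consider two rounds $t_1 \leq t_2$ and assume that the time-interval $[0,t_1]$ is $(K,1/(2n))$-smoothing. Then for any node $k\in V$ and $\delta>1/n$, \[ \Pr\left[ \left|\sum_{w\in V} x_w^{(t_1)} \mathbf{M}^{[t_1+1,t_2]}_{w,k} - \overline{x} \right|\geq\delta \right]\leq2 \exp\left( -\frac{(\delta - 1/(2n) )^2}{4 \sum_{w\in V} \left( \mathbf{M}^{[t_1+1,t_2]}_{w,k} -1/n\right)^2}\right). \] In particular, for any node $w\in V$ and $\delta>1/n$, \[ \Pr\left[ \left|x_w^{(t_1)} - \overline{x} \right|\geq\delta \right]\leq2 \exp\left( -\left(\delta - \tfrac{1}{2n} \right)^2\big/ 4 \right). \]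
   Context: $G=(V,E)$ has $n$ nodes. A matching $\mathbf{M}^{(t)}\subseteq E$ is identified with the symmetric matrix with entries $1/2$ on $(u,u),(v,v),(u,v),(v,u)$ for $\{u,v\}\in\mathbf{M}^{(t)}$, $1$ on the diagonal for unmatched nodes, $0$ elsewhere; $\mathbf{M}^{[a,b]}=\prod_{s=a}^b\mathbf{M}^{(s)}$ (identity if $a>b$). Discrete protocol: in round $t$, for each $\{u,v\}\in\mathbf{M}^{(t)}$ both nodes get $\lfloor (x^{(t-1)}_u+x^{(t-1)}_v)/2\rfloor$ tokens and an excess token (if the sum is odd) goes to $u$ or $v$ with probability $1/2$ each, independently; unmatched nodes keep their load. $\overline{x}=\frac1n\sum_w x^{(0)}_w$. The continuous process is $\xi^{(t)}=\xi^{(t-1)}\mathbf{M}^{(t)}$. The interval $[t_1,t_2]$ is $(K,\epsilon)$-smoothing if every $\xi^{(t_1)}\in\mathbb{R}^n$ with discrepancy $\max_{u,v}|\xi_u-\xi_v|\le K$ yields $\xi^{(t_2)}$ with discrepancy at most $\epsilon$. Probabilities are over the random orientations. *)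

From HB Require Import structures.
From mathcomp Require Import all_boot all_order all_algebra.
From mathcomp Require Import all_classical all_reals all_analysis.
Set Implicit Arguments. Unset Strict Implicit. Unset Printing Implicit Defensive.
Import Order.TTheory GRing.Theory Num.Theory.
Local Open Scope ring_scope.

Definition simple_graph (n : nat) (e : rel 'I_n) : Prop :=
  irreflexive e /\ symmetric e.

(* A matching is given by its "partner" involution p : u is matched with p u
   when p u != u, and unmatched when p u = u.  It is a matching of the graph e
   when every matched pair is an edge. *)
Definition is_matching (n : nat) (e : rel 'I_n) (p : 'I_n -> 'I_n) : Prop :=
  (forall u, p (p u) = u) /\ (forall u, p u != u -> e u (p u)).

Definition match_mx (R : numFieldType) (n : nat) (p : 'I_n -> 'I_n) : 'M[R]_n :=
  \matrix_(u, v)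
    if u == v then (if p u == u then 1 else 2^-1)
    else (if p u == v then 2^-1 else 0).

Definition match_prod (R : numFieldType) (n : nat) (Ms : nat -> 'I_n -> 'I_n)
    (a b : nat) : 'M[R]_n :=
  \big[mulmx/1%:M]_(a <= s < b.+1) match_mx R (Ms s).

Definition discr (R : realDomainType) (n : nat) (xi : 'rV[R]_n) : R :=
  \big[Num.max/0]_(u < n) \big[Num.max/0]_(v < n) `|xi 0 u - xi 0 v|.

Definition smoothing (R : realFieldType) (n : nat) (Ms : nat -> 'I_n -> 'I_n)
    (t1 t2 : nat) (K eps : R) : Prop :=
  forall xi : 'rV[R]_n, discr xi <= K ->
    discr (xi *m match_prod R Ms t1.+1 t2) <= eps.

(* One round of the discrete protocol with matching p.  The random orientation
   of the edge {u, p u} is encoded by the bit b m of its smaller endpoint m: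
   the excess token goes to m iff b m is true. *)
Definition disc_step (n : nat) (p : 'I_n -> 'I_n) (b : 'I_n -> bool)
    (x : 'I_n -> int) : 'I_n -> int :=
  fun u =>
    let v := p u in
    if v == u then x u else
    let s := x u + x v in
    let m := if (val u <= val v)%N then u else v in
    (s %/ 2)%Z + (if ((s %% 2)%Z == 1) && (b m == (u == m)) then 1 else 0).

Fixpoint load (n : nat) (Ms : nat -> 'I_n -> 'I_n) (x0 : 'I_n -> int)
    (bits : nat -> 'I_n -> bool) (t : nat) : 'I_n -> int :=
  match t with
  | 0 => x0
  | t'.+1 => disc_step (Ms t) (bits t) (load Ms x0 bits t')
  end.

(* Sample space for rounds 1..T: one independent fair bit per (round, node);
   round t uses omega (t-1).  Uniform probability. *)
Definition Omega (n T : nat) := {ffun 'I_T -> {ffun 'I_n -> bool}}.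

Definition bits_of (n T : nat) (omega : Omega n T) : nat -> 'I_n -> bool :=
  fun t u => match t with
             | 0 => false
             | s.+1 => match (insub s : option 'I_T) with
                       | Some i => omega i u
                       | None => false
                       end
             end.

Definition Pr (R : numFieldType) (n T : nat) (A : pred (Omega n T)) : R :=
  #|[pred w in A]|%:R / #|Omega n T|%:R.

Definition avg_load (R : numFieldType) (n : nat) (x0 : 'I_n -> int) : R :=
  (\sum_(w < n) (x0 w)%:~R) / n%:R.

(* Write c_t := M^[t+1,t2]_{.,k} and Y_t := sum_w x_w^(t) c_t(w).  Since c_t is
   the average of c_(t+1) over every edge matched in round t+1, the deterministic
   part of a balancing step leaves Y unchanged, and each edge {u,v} with odd load
   sum adds an independent +-(c_(t+1)(u) - c_(t+1)(v))/2.  A Hoeffding-type bound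
   on each such term (cosh y <= exp (2 y^2)) bounds the moment generating function
   of a round by exp (theta^2 (Phi c_(t+1) - Phi c_t)), where
   Phi c = sqdev c = sum_w (c w - 1/n)^2 drops by exactly that amount under
   averaging; telescoping gives E exp (theta (Y_t1 - Y_0)) <= exp (theta^2 Phi c_t1).
   Smoothing on [0,t1] places Y_0 within 1/(2n) of the average load, and Chernoff
   with theta = lambda / (2 Phi c_t1) gives the tail bound.  If Phi c_t1 = 0 then
   Y_t1 is the average load by conservation.  The second bound is the case
   t2 = t1, k = w, where Phi = 1 - 1/n. *)

From HB Require Import structures.
From mathcomp Require Import all_boot all_order all_algebra.
From mathcomp Require Import all_classical all_reals all_analysis.
From mathcomp Require Import ring lra zify.
Import Order.TTheory GRing.Theory Num.Theory.
Local Open Scope ring_scope.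
Set Implicit Arguments. Unset Strict Implicit.

Section MatchingMatrices.
Variables (R : numFieldType) (n : nat).
Implicit Types (p : 'I_n -> 'I_n) (M N : 'M[R]_n).

Lemma sum_eq_mul (a : 'I_n) (F : 'I_n -> R) : \sum_v (a == v)%:R * F v = F a.
Proof.
rewrite (bigD1 a) //= eqxx mul1r big1 ?addr0 // => v /negPf.
by rewrite eq_sym => ->; rewrite mul0r.
Qed.

Lemma sum_eq (a : 'I_n) : \sum_v (a == v)%:R = 1 :> R.
Proof. by under eq_bigr do rewrite -[_%:R]mulr1; rewrite sum_eq_mul. Qed.

Lemma half_twice : (1 + 1) / 2 = 1 :> R.
Proof. by rewrite divff // -[1 + 1]/(2%:R) pnatr_eq0. Qed.

Lemma match_mxE p u v : match_mx R p u v = ((u == v)%:R + (p u == v)%:R) / 2.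
Proof.
rewrite /match_mx mxE; case: (eqVneq u v) => [<-|uv].
  by case: (eqVneq (p u) u) => _ /=; rewrite ?half_twice ?addr0 ?mul1r.
by case: (eqVneq (p u) v) => _ /=; rewrite add0r ?mul1r ?mul0r.
Qed.

Lemma mul_match_mxE p N u j :
  (match_mx R p *m N) u j = (N u j + N (p u) j) / 2.
Proof.
rewrite mxE; under eq_bigr do rewrite match_mxE mulrAC mulrDl.
by rewrite -mulr_suml big_split /= !sum_eq_mul.
Qed.

Definition doubly_stochastic M :=
  [/\ forall i j, 0 <= M i j, forall i, \sum_j M i j = 1 & forall j, \sum_i M i j = 1].

Lemma doubly_stochastic1 : doubly_stochastic 1%:M.
Proof.
split=> [i j|i|j]; rewrite ?mxE ?ler0n //.
  by under eq_bigr do rewrite mxE; rewrite sum_eq.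
by under eq_bigr do rewrite mxE eq_sym; rewrite sum_eq.
Qed.

Lemma doubly_stochasticM M N :
  doubly_stochastic M -> doubly_stochastic N -> doubly_stochastic (M *m N).
Proof.
move=> [M0 Mr Mc] [N0 Nr Nc]; split=> [i j|i|j].
- by rewrite mxE; apply: sumr_ge0 => k _; apply: mulr_ge0.
- under eq_bigr do rewrite mxE; rewrite exchange_big /=.
  by under eq_bigr do rewrite -mulr_sumr Nr mulr1; apply: Mr.
- under eq_bigr do rewrite mxE; rewrite exchange_big /=.
  by under eq_bigr do rewrite -mulr_suml Mc mul1r; apply: Nc.
Qed.

Lemma doubly_stochastic_match p :
  involutive p -> doubly_stochastic (match_mx R p).
Proof.
move=> pK; split=> [i j|i|j].
- by rewrite match_mxE divr_ge0 ?addr_ge0 ?ler0n.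
- under eq_bigr do rewrite match_mxE mulrDl.
  by rewrite big_split /= -!mulr_suml !sum_eq -mulrDl half_twice.
- have swap i : (p i == j) = (p j == i) by apply/eqP/eqP => <-; rewrite pK.
  under eq_bigr do rewrite match_mxE mulrDl eq_sym swap.
  by rewrite big_split /= -!mulr_suml !sum_eq -mulrDl half_twice.
Qed.

Lemma doubly_stochastic_match_prod (Ms : nat -> 'I_n -> 'I_n) a b :
  (forall t, (0 < t)%N -> involutive (Ms t)) -> (0 < a)%N ->
  doubly_stochastic (match_prod R Ms a b).
Proof.
move=> MsK a_gt0; rewrite /match_prod big_nat_cond.
apply: (big_ind doubly_stochastic doubly_stochastic1 (@doubly_stochasticM)).
move=> i /andP[/andP[ai _] _]; apply/doubly_stochastic_match/MsK.
exact: leq_trans ai.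
Qed.

Lemma match_prod_split (Ms : nat -> 'I_n -> 'I_n) a t1 t2 :
  (a <= t1.+1)%N -> (t1 <= t2)%N ->
  match_prod R Ms a t2 = match_prod R Ms a t1 *m match_prod R Ms t1.+1 t2.
Proof.
move=> + t12; rewrite /match_prod; move Hd : (t1.+1 - a)%N => d.
elim: d a Hd => [|d IH] a Hd at1.
  have -> : a = t1.+1 by lia.
  by rewrite [X in X *m _]big_geq // mul1mx.
rewrite big_ltn; last by lia.
rewrite [X in _ = X *m _]big_ltn; last by lia.
by rewrite (IH a.+1) ?mulmxA //; lia.
Qed.

Lemma match_prodS (Ms : nat -> 'I_n -> 'I_n) t t2 : (t <= t2)%N ->
  match_prod R Ms t t2 = match_mx R (Ms t) *m match_prod R Ms t.+1 t2.
Proof. by move=> tt2; rewrite /match_prod big_ltn. Qed.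

End MatchingMatrices.

Section OneRound.
Variables (R : realFieldType) (n : nat) (p : 'I_n -> 'I_n).
Hypothesis pK : involutive p.

Lemma sum_pairs (g : 'I_n -> R) :
  (forall w, g (p w) = g w) -> (forall w, p w = w -> g w = 0) ->
  \sum_w g w = 2 * \sum_(w | (val w < val (p w))%N) g w.
Proof.
move=> gp g0.
have -> : \sum_w g w = \sum_(w | (val w < val (p w))%N) g w
                     + \sum_(w | (val (p w) < val w)%N) g w.
  rewrite !(big_mkcond (fun w => _ < _)%N) -big_split /=; apply: eq_bigr => w _.
  case: ltngtP => [||/val_inj/esym pw]; rewrite ?addr0 ?add0r //.
  by rewrite g0 ?addr0.
rewrite [X in _ + X](reindex_inj (can_inj pK)) /=.
under [X in _ + X]eq_bigl do rewrite pK.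
under [X in _ + X]eq_bigr do rewrite gp.
by rewrite mulr2n mulrDl mul1r.
Qed.

Definition sqdev (c : 'I_n -> R) := \sum_w (c w - n%:R^-1) ^+ 2.

Lemma sqdev_ge0 c : 0 <= sqdev c.
Proof. by apply: sumr_ge0 => w _; apply: sqr_ge0. Qed.

Lemma sqdev_average (c : 'I_n -> R) :
  sqdev c - sqdev (fun w => (c w + c (p w)) / 2)
  = \sum_(w | (val w < val (p w))%N) (c w - c (p w)) ^+ 2 / 2.
Proof.
pose F w := (c w - n%:R^-1) ^+ 2 - ((c w + c (p w)) / 2 - n%:R^-1) ^+ 2.
have FpF w : F w + F (p w) = (c w - c (p w)) ^+ 2 / 2 by rewrite /F pK; lra.
transitivity (\sum_w F w); first by rewrite /sqdev -sumrB.
have -> : \sum_w F w = 2^-1 * \sum_w (F w + F (p w)).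
  have SFp : \sum_w F (p w) = \sum_w F w by rewrite [RHS](reindex_inj (can_inj pK)).
  by rewrite [in RHS]big_split /= SFp; lra.
under eq_bigr do rewrite FpF.
rewrite (sum_pairs (g := fun w => (c w - c (p w)) ^+ 2 / 2)).
- by rewrite mulrA mulVf ?mul1r // pnatr_eq0.
- by move=> w; rewrite pK; lra.
- by move=> w ->; rewrite subrr expr0n mul0r.
Qed.

Variables (b : 'I_n -> bool) (x : 'I_n -> int).

Definition rounding_error u : R :=
  (disc_step p b x u)%:~R - ((x u)%:~R + (x (p u))%:~R) / 2.

Let halves (s : int) : (s%:~R : R) = ((s %/ 2)%Z)%:~R * 2 + ((s %% 2)%Z)%:~R.
Proof. by rewrite {1}(divz_eq s 2) intrD intrM. Qed.

Let mod2_cases (s : int) : (s %% 2)%Z = 0 \/ (s %% 2)%Z = 1.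
Proof. lia. Qed.

Lemma rounding_error_fixed u : p u = u -> rounding_error u = 0.
Proof. by move=> pu; rewrite /rounding_error /disc_step pu eqxx; lra. Qed.

Lemma rounding_error_lower u : (val u < val (p u))%N ->
  rounding_error u =
  if ((x u + x (p u)) %% 2)%Z == 1 then (if b u then 2^-1 else - 2^-1) else 0.
Proof.
move=> lt_u_pu; have pu_neq : p u != u by apply: contraTneq lt_u_pu => ->; rewrite ltnn.
rewrite /rounding_error /disc_step (negPf pu_neq) (ltnW lt_u_pu) eqxx -intrD.
rewrite (halves (x u + x (p u))).
by case: (mod2_cases (x u + x (p u))) => ->; case: (b u); rewrite /= ?intrD /=; lra.
Qed.

Let rounding_error_upper u : (val u < val (p u))%N ->
  rounding_error (p u) = - rounding_error u.
Proof.
move=> lt_u_pu; have pu_neq : p u != u by apply: contraTneq lt_u_pu => ->; rewrite ltnn.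
rewrite [rounding_error u]rounding_error_lower // /rounding_error /disc_step pK.
rewrite leqNgt lt_u_pu /= eq_sym (negPf pu_neq).
rewrite [x (p u) + _]addrC [_%:~R + (x u)%:~R]addrC -intrD.
rewrite (halves (x u + x (p u))).
by case: (mod2_cases (x u + x (p u))) => ->; case: (b u); rewrite /= ?intrD /=; lra.
Qed.

Lemma rounding_error_partner u : rounding_error (p u) = - rounding_error u.
Proof.
case: (ltngtP (val u) (val (p u))) => [|gt|/val_inj pu].
- exact: rounding_error_upper.
- by have := @rounding_error_upper (p u); rewrite pK => /(_ gt) ->; rewrite opprK.
- by rewrite -pu !rounding_error_fixed ?oppr0.
Qed.

Definition orient_gain (c : 'I_n -> R) w (bb : bool) : R :=
  if ((x w + x (p w)) %% 2)%Z == 1 then (if bb then 2^-1 else - 2^-1) * (c w - c (p w))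
  else 0.

Lemma orient_gainN (c : 'I_n -> R) w :
  orient_gain c w false = - orient_gain c w true.
Proof. by rewrite /orient_gain; case: ifP; rewrite ?oppr0 ?mulNr. Qed.

Lemma orient_gain_sq (c : 'I_n -> R) w :
  orient_gain c w true ^+ 2 <= (c w - c (p w)) ^+ 2 / 4.
Proof.
rewrite /orient_gain; case: ifP => _; last by rewrite expr0n divr_ge0 ?sqr_ge0.
by rewrite exprMn mulrC (_ : 2^-1 ^+ 2 = 4^-1) //; field.
Qed.

Lemma sum_averaged (c : 'I_n -> R) :
  \sum_w ((x w)%:~R + (x (p w))%:~R) / 2 * c w = \sum_w (x w)%:~R * ((c w + c (p w)) / 2).
Proof.
under eq_bigr do rewrite mulrDl mulrDl.
rewrite big_split /= [X in _ + X](reindex_inj (can_inj pK)) -big_split /=.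
by apply: eq_bigr => w _; rewrite pK; lra.
Qed.

Lemma sum_rounding_error (c : 'I_n -> R) :
  \sum_w rounding_error w * c w =
  \sum_(w | (val w < val (p w))%N) rounding_error w * (c w - c (p w)).
Proof.
pose g w := rounding_error w * (c w - c (p w)).
have gp w : g (p w) = g w by rewrite /g pK rounding_error_partner; lra.
have g0 w : p w = w -> g w = 0 by rewrite /g => ->; rewrite subrr mulr0.
have twice : \sum_w g w = 2 * \sum_w rounding_error w * c w.
  under eq_bigr do rewrite /g mulrBr; rewrite sumrB.
  rewrite [X in _ - X](reindex_inj (can_inj pK)) /=.
  under [X in _ - X]eq_bigr do rewrite pK rounding_error_partner mulNr.
  by rewrite sumrN opprK -mulr2n mulr_natl.
apply: (@mulfI _ 2); first by rewrite pnatr_eq0.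
by rewrite -twice (sum_pairs gp g0).
Qed.

Lemma sum_disc_step (c : 'I_n -> R) :
  \sum_w (disc_step p b x w)%:~R * c w =
  \sum_w (x w)%:~R * ((c w + c (p w)) / 2)
  + \sum_(w | (val w < val (p w))%N) orient_gain c w (b w).
Proof.
have split_err w : (disc_step p b x w)%:~R
    = ((x w)%:~R + (x (p w))%:~R) / 2 + rounding_error w :> R.
  by rewrite /rounding_error addrC subrK.
under eq_bigr do rewrite split_err mulrDl.
rewrite big_split /= sum_averaged sum_rounding_error; congr (_ + _).
by apply: eq_bigr => w lt_w_pw; rewrite rounding_error_lower // /orient_gain; case: ifP; rewrite ?mul0r.
Qed.

Lemma sum_disc_step1 : \sum_w ((disc_step p b x w)%:~R : R) = \sum_w (x w)%:~R.
Proof.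
transitivity (\sum_w (disc_step p b x w)%:~R * (1 : R)).
  by apply: eq_bigr => w _; rewrite mulr1.
rewrite sum_disc_step [X in _ + X]big1 => [|w _]; last by rewrite /orient_gain subrr mulr0; case: ifP.
by rewrite addr0; apply: eq_bigr => w _; rewrite half_twice mulr1.
Qed.

End OneRound.

Section ExponentialMoments.
Variable R : realType.

Lemma expR_add_expRN_le (y : R) : expR y + expR (- y) <= 2 * expR (2 * y ^+ 2).
Proof.
have expRyN : expR y * expR (- y) = 1 by rewrite -expRD subrr expR0.
have ge1y := expR_ge1Dx y; have ge1Ny := expR_ge1Dx (- y).
have ge1y2 := expR_ge1Dx (2 * y ^+ 2).
have gt0y := expR_gt0 y; have gt0Ny := expR_gt0 (- y).
(* above |y| = 1/2 each exponential is below expR (2 y^2); below, expR (+-y) (1 -+ y) <= 1 *)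
case: (lerP (2^-1) `|y|) => y_large.
  have y_le : `|y| <= 2 * y ^+ 2.
    have y_ge0 := normr_ge0 y.
    by rewrite -real_normK ?num_real //; nra.
  have e1 : expR y <= expR (2 * y ^+ 2).
    by rewrite ler_expR (le_trans (ler_norm _) y_le).
  have e2 : expR (- y) <= expR (2 * y ^+ 2).
    by rewrite ler_expR (le_trans _ y_le) // -normrN ler_norm.
  lra.
have [y_lt y_gt] : y < 2^-1 /\ - 2^-1 < y.
  by move: y_large; rewrite ltr_norml => /andP[].
have h1 : expR y * (1 - y) <= 1 by nra.
have h2 : expR (- y) * (1 + y) <= 1 by nra.
have h3 : (expR y + expR (- y)) * (1 - y ^+ 2) <= 2 by nra.
nra.
Qed.

Variables (n : nat) (p : 'I_n -> 'I_n) (x : 'I_n -> int).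
Hypothesis pK : involutive p.

Lemma mgf_round (c : 'I_n -> R) (th : R) :
  \sum_(bt : {ffun 'I_n -> bool})
     expR (th * \sum_(w | (val w < val (p w))%N) orient_gain p x c w (bt w))
  <= #|{ffun 'I_n -> bool}|%:R *
     expR (th ^+ 2 * (sqdev c - sqdev (fun w => (c w + c (p w)) / 2))).
Proof.
have -> : #|{ffun 'I_n -> bool}|%:R = \prod_(w < n) (2 : R).
  by rewrite card_ffun card_bool card_ord natrX prodr_const card_ord.
rewrite sqdev_average // [X in _ <= _ * expR (_ * X)]big_mkcond mulr_sumr expR_sum.
rewrite -big_split /=.
under eq_bigr do rewrite big_mkcond mulr_sumr expR_sum.
rewrite -(bigA_distr_bigA (fun w bb => expR (th * if (val w < val (p w))%N
                                                then orient_gain p x c w bb else 0))).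
apply: ler_prod => w _; rewrite sumr_ge0 => [|bb _]; last exact: expR_ge0.
rewrite big_bool /=; case: ifP => _; last by rewrite !mulr0 expR0 mulr1.
rewrite orient_gainN mulrN.
apply: le_trans (expR_add_expRN_le _) _.
rewrite ler_pM2l // ler_expR exprMn mulrCA ler_wpM2l ?sqr_ge0 //.
have := orient_gain_sq p x c w; lra.
Qed.

End ExponentialMoments.

Section SampleSpace.
Variable n : nat.

Definition omega_ext T (om : Omega n T) (bt : {ffun 'I_n -> bool}) : Omega n T.+1 :=
  [ffun i : 'I_T.+1 => if insub (val i) is Some j then om j else bt].

Definition omega_split T (om : Omega n T.+1) : Omega n T * {ffun 'I_n -> bool} :=
  ([ffun j : 'I_T => om (widen_ord (leqnSn T) j)], om ord_max).

Lemma omega_ext_bij T : bijective (fun pr : Omega n T * _ => omega_ext pr.1 pr.2).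
Proof.
exists (@omega_split T) => [[om bt]|om]; rewrite /omega_split /omega_ext /=.
- congr (_, _); last by rewrite ffunE insubF //= ltnn.
  apply/ffunP => j; rewrite !ffunE insubT ?ltn_ord //= => lt_j.
  by congr (om _); apply: val_inj.
- apply/ffunP => i; rewrite !ffunE; case: insubP => [j _ ij|].
    by rewrite ffunE; congr (om _); apply: val_inj.
  rewrite -leqNgt => le_T_i; congr (om _); apply: val_inj => /=.
  by apply/eqP; rewrite eqn_leq le_T_i -ltnS ltn_ord.
Qed.

Lemma sum_omega_ext (R : nmodType) T (G : Omega n T.+1 -> R) :
  \sum_om G om = \sum_(om : Omega n T) \sum_(bt : {ffun 'I_n -> bool}) G (omega_ext om bt).
Proof. by rewrite pair_big /= (reindex _ (onW_bij _ (omega_ext_bij T))). Qed.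

Lemma bits_of_ext T (om : Omega n T) bt t u : (t <= T)%N ->
  bits_of (omega_ext om bt) t u = bits_of om t u.
Proof.
case: t => [|s] //= lt_s_T.
case: insubP => [i _ si|]; last by rewrite ltnS (ltnW lt_s_T).
rewrite ffunE; case: insubP => [j _ ij|]; last by rewrite si lt_s_T.
case: insubP => [j' _ sj'|]; last by rewrite lt_s_T.
by congr (om _ u); apply: val_inj; rewrite /= ij sj' si.
Qed.

Lemma bits_of_ext_last T (om : Omega n T) bt u :
  bits_of (omega_ext om bt) T.+1 u = bt u.
Proof. by rewrite /= insubT //= => ?; rewrite ffunE insubF //= ltnn. Qed.

Lemma eq_load (Ms : nat -> 'I_n -> 'I_n) x0 (b1 b2 : nat -> 'I_n -> bool) t :
  (forall s u, (s <= t)%N -> b1 s u = b2 s u) -> load Ms x0 b1 t =1 load Ms x0 b2 t.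
Proof.
elim: t => [|t IH] //= b12 u.
by rewrite /disc_step !IH ?b12 // => s v le_s_t; rewrite b12 // ltnW.
Qed.

Lemma load_omega_ext (Ms : nat -> 'I_n -> 'I_n) x0 T (om : Omega n T) bt u :
  load Ms x0 (bits_of (omega_ext om bt)) T.+1 u
  = disc_step (Ms T.+1) bt (load Ms x0 (bits_of om) T) u.
Proof.
by rewrite /= /disc_step !(@eq_load _ _ _ (bits_of om)) => [|s v le_s_T|s v le_s_T];
  rewrite ?bits_of_ext_last ?bits_of_ext.
Qed.

End SampleSpace.

Section Discrepancy.
Variables (R : realFieldType) (n : nat).
Implicit Type xi : 'rV[R]_n.

Lemma discr_ge xi u v : `|xi 0 u - xi 0 v| <= discr xi.
Proof.
rewrite /discr; apply: le_trans (le_bigmax _ _ u).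
exact: (le_bigmax _ (fun v => `|xi 0 u - xi 0 v|)).
Qed.

Lemma dev_mean_le_discr xi v : `|xi 0 v - (\sum_u xi 0 u) / n%:R| <= discr xi.
Proof.
have n_gt0 : (0 < n)%N by apply: leq_ltn_trans (ltn_ord v).
have -> : xi 0 v - (\sum_u xi 0 u) / n%:R = (\sum_u (xi 0 v - xi 0 u)) / n%:R.
  by rewrite sumrB sumr_const card_ord -(mulr_natr (xi 0 v)); field; rewrite pnatr_eq0 -lt0n.
rewrite normrM normfV normr_nat ler_pdivrMr ?ltr0n //.
apply: le_trans (ler_norm_sum _ _ _) _.
apply: le_trans (_ : \sum_(u < n) discr xi <= _).
  by apply: ler_sum => u _; apply: discr_ge.
by rewrite sumr_const card_ord mulr_natr.
Qed.

Lemma convex_comb_near (M : 'M[R]_n) (a : 'I_n -> R) (m e : R) k :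
  doubly_stochastic M -> (forall v, `|a v - m| <= e) -> `|\sum_v a v * M v k - m| <= e.
Proof.
move=> [M_ge0 _ Mc] a_near.
have -> : \sum_v a v * M v k - m = \sum_v (a v - m) * M v k.
  under [X in _ = X]eq_bigr do rewrite mulrBl.
  by rewrite sumrB -mulr_sumr Mc mulr1.
apply: le_trans (ler_norm_sum _ _ _) _.
rewrite -[X in _ <= X]mulr1 -(Mc k) mulr_sumr; apply: ler_sum => v _.
by rewrite normrM (ger0_norm (M_ge0 _ _)) ler_wpM2r.
Qed.

End Discrepancy.

Section Concentration.
Variables (R : realType) (n : nat) (Ms : nat -> 'I_n -> 'I_n) (x0 : 'I_n -> int).
Variables (t2 : nat) (k : 'I_n).
Hypothesis MsK : forall t, (0 < t)%N -> involutive (Ms t).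

Definition weight t (w : 'I_n) : R := match_prod R Ms t.+1 t2 w k.

Definition weighted_load T (om : Omega n T) : R :=
  \sum_w (load Ms x0 (bits_of om) T w)%:~R * weight T w.

Definition weighted_load0 : R := \sum_w (x0 w)%:~R * weight 0 w.

Lemma weight_step T w : (T < t2)%N ->
  weight T w = (weight T.+1 w + weight T.+1 (Ms T.+1 w)) / 2.
Proof. by move=> lt_T_t2; rewrite /weight (match_prodS _ _ lt_T_t2) mul_match_mxE. Qed.

Lemma weighted_load_ext T (om : Omega n T) bt : (T < t2)%N ->
  weighted_load (omega_ext om bt) = weighted_load om +
  \sum_(w | (val w < val (Ms T.+1 w))%N)
     orient_gain (Ms T.+1) (load Ms x0 (bits_of om) T) (weight T.+1) w (bt w).
Proof.
move=> lt_T_t2; rewrite /weighted_load.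
under eq_bigr do rewrite load_omega_ext.
rewrite (sum_disc_step (MsK (ltn0Sn T))); congr (_ + _).
by apply: eq_bigr => w _; rewrite (weight_step _ lt_T_t2).
Qed.

Lemma mgf_weighted_load (th : R) T : (T <= t2)%N ->
  \sum_(om : Omega n T) expR (th * (weighted_load om - weighted_load0))
  <= #|Omega n T|%:R * expR (th ^+ 2 * (sqdev (weight T) - sqdev (weight 0))).
Proof.
elim: T => [_|T IH lt_T_t2].
  rewrite subrr mulr0 expR0 mulr1 -sum1_card natr_sum.
  by apply: ler_sum => om _; rewrite /weighted_load /= subrr mulr0 expR0.
have sqdev_avg : sqdev (fun w => (weight T.+1 w + weight T.+1 (Ms T.+1 w)) / 2)
                 = sqdev (weight T).
  by apply: eq_bigr => w _; rewrite (weight_step _ lt_T_t2).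
rewrite sum_omega_ext.
under eq_bigr => om _.
  under eq_bigr => bt _ do rewrite weighted_load_ext // addrAC mulrDr expRD.
  rewrite -mulr_sumr.
  over.
apply: le_trans (_ : \sum_(om : Omega n T) expR (th * (weighted_load om - weighted_load0)) *
     (#|{ffun 'I_n -> bool}|%:R *
      expR (th ^+ 2 * (sqdev (weight T.+1) - sqdev (weight T)))) <= _).
  apply: ler_sum => om _; rewrite ler_wpM2l ?expR_ge0 // -sqdev_avg.
  exact: mgf_round (MsK (ltn0Sn T)) _ _.
rewrite -mulr_suml.
apply: le_trans (ler_wpM2r _ (IH (ltnW lt_T_t2))) _.
  by rewrite mulr_ge0 ?ler0n ?expR_ge0.
have -> : #|Omega n T.+1|%:R = #|Omega n T|%:R * #|{ffun 'I_n -> bool}|%:R :> R.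
  by rewrite !card_ffun !card_ord expnSr natrM.
by rewrite mulrACA -expRD -mulrDr addrC addrA subrK.
Qed.

Lemma weighted_load0_near_avg (K : R) t1 :
  discr (\row_u ((x0 u)%:~R : R)) <= K -> (t1 <= t2)%N ->
  smoothing Ms 0 t1 K (2 * n%:R)^-1 ->
  `|weighted_load0 - avg_load R x0| <= (2 * n%:R)^-1.
Proof.
move=> x0K t12 smooth.
have n_gt0 : (0 < n)%N by apply: leq_ltn_trans (ltn_ord k).
set P := match_prod R Ms 1 t1; set xi := \row_u ((x0 u)%:~R : R) *m P.
have [_ P_rows _] : doubly_stochastic P by apply: doubly_stochastic_match_prod.
have xiE v : xi 0 v = \sum_w (x0 w)%:~R * P w v.
  by rewrite mxE; apply: eq_bigr => w _; rewrite mxE.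
have -> : weighted_load0 = \sum_v xi 0 v * match_prod R Ms t1.+1 t2 v k.
  rewrite /weighted_load0 /weight (match_prod_split _ _ (ltn0Sn t1) t12) //.
  under eq_bigr do rewrite mxE mulr_sumr.
  rewrite exchange_big /=; apply: eq_bigr => v _.
  by rewrite xiE mulr_suml; apply: eq_bigr => w _; rewrite mulrA.
have avgE : avg_load R x0 = (\sum_v xi 0 v) / n%:R.
  congr (_ / _); under [X in _ = X]eq_bigr do rewrite xiE.
  by rewrite exchange_big /=; apply: eq_bigr => w _; rewrite -mulr_sumr P_rows mulr1.
apply: convex_comb_near; first exact: doubly_stochastic_match_prod.
by move=> v; rewrite avgE (le_trans (dev_mean_le_discr _ _)) ?smooth.
Qed.

Lemma Pr_deviation_le t1 (th delta : R) : (t1 <= t2)%N -> 0 <= th ->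
  `|weighted_load0 - avg_load R x0| <= (2 * n%:R)^-1 ->
  Pr R [pred om : Omega n t1 | delta <= `|weighted_load om - avg_load R x0|]
  <= 2 * expR (th ^+ 2 * sqdev (weight t1) - th * (delta - (2 * n%:R)^-1)).
Proof.
move=> t12 th_ge0 start_near.
set lam := delta - _; set Z := fun om : Omega n t1 => weighted_load om - weighted_load0.
have ind_le om : (if delta <= `|weighted_load om - avg_load R x0| then 1 else 0)
    <= expR (- th * lam) * (expR (th * Z om) + expR (- th * Z om)).
  case: ifP => [dev_large|_]; last by rewrite mulr_ge0 ?addr_ge0 ?expR_ge0.
  have lam_le : lam <= `|Z om|.
    have := ler_normD (Z om) (weighted_load0 - avg_load R x0).
    by rewrite /Z addrA subrK /lam; lra.
  have expZ : expR (th * `|Z om|) <= expR (th * Z om) + expR (- th * Z om).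
    by case: (ler0P (Z om)) => _; rewrite ?mulrN ?mulNr ?lerDl ?lerDr expR_ge0.
  apply: le_trans (ler_wpM2l (expR_ge0 _) expZ); rewrite -expRD.
  by apply: le_trans (expR_ge1Dx _); nra.
have card_gt0 : (0 : R) < #|Omega n t1|%:R.
  by rewrite ltr0n; apply/card_gt0P; exists [ffun=> [ffun=> false]].
rewrite /Pr ler_pdivrMr // -sum1_card natr_sum big_mkcond /=.
apply: le_trans (ler_sum _ (fun om _ => ind_le om)) _.
rewrite -mulr_sumr big_split /=.
have mgf_le (s : R) : s ^+ 2 = th ^+ 2 ->
    \sum_om expR (s * Z om) <= #|Omega n t1|%:R * expR (th ^+ 2 * sqdev (weight t1)).
  move=> s2; apply: le_trans (mgf_weighted_load s t12) _.
  rewrite s2 ler_wpM2l ?ler0n // ler_expR.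
  by have := sqdev_ge0 (weight 0); have := sqr_ge0 th; nra.
apply: le_trans (ler_wpM2l (expR_ge0 _) (lerD (mgf_le th _) (mgf_le (- th) _))) _;
  rewrite ?sqrrN //.
by rewrite -mulNr expRD le_eqVlt; apply/orP; left; apply/eqP; ring.
Qed.

Lemma sum_load bits t : \sum_w ((load Ms x0 bits t w)%:~R : R) = \sum_w (x0 w)%:~R.
Proof. by elim: t => //= t <-; rewrite (sum_disc_step1 _ (MsK (ltn0Sn t))). Qed.

Lemma weighted_load_uniform t1 (om : Omega n t1) :
  sqdev (weight t1) = 0 -> weighted_load om = avg_load R x0.
Proof.
move=> /eqP; rewrite psumr_eq0 => [/allP uniform|w _]; last exact: sqr_ge0.
have weightE w : weight t1 w = n%:R^-1.
  by apply/eqP; move: (uniform w (mem_index_enum w)); rewrite sqrf_eq0 subr_eq0.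
rewrite /weighted_load /avg_load; under eq_bigr do rewrite weightE.
by rewrite -mulr_suml sum_load.
Qed.

Lemma deviation_tail (K : R) t1 (delta : R) :
  discr (\row_u ((x0 u)%:~R : R)) <= K -> (t1 <= t2)%N ->
  smoothing Ms 0 t1 K (2 * n%:R)^-1 -> n%:R^-1 < delta ->
  Pr R [pred om : Omega n t1 | delta <= `|weighted_load om - avg_load R x0|]
  <= (if 4 * sqdev (weight t1) == 0 then 0
      else 2 * expR (- (delta - (2 * n%:R)^-1) ^+ 2 / (4 * sqdev (weight t1)))).
Proof.
move=> x0K t12 smooth delta_gt.
have n_gt0 : (0 : R) < n%:R by rewrite ltr0n (leq_ltn_trans _ (ltn_ord k)).
have lam_gt0 : 0 < delta - (2 * n%:R)^-1.
  have : (2 * n%:R)^-1 < n%:R^-1 :> R by rewrite ltf_pV2 ?posrE ?mulr_gt0 //; lra.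
  lra.
have := sqdev_ge0 (weight t1); set s := sqdev _ => s_ge0.
case: eqP => [s0|s_neq0].
  have delta_gt0 : 0 < delta by apply: lt_trans delta_gt; rewrite invr_gt0.
  rewrite /Pr (eq_card0 (_ : _ =i pred0)) ?mul0r // => om.
  by rewrite !inE weighted_load_uniform ?subrr ?normr0 ?lt_geF // -/s; lra.
have s_gt0 : 0 < s by rewrite lt_def s_ge0 andbT; apply/eqP => s0; apply: s_neq0; rewrite s0 mulr0.
(* this theta minimises theta^2 s - theta (delta - 1/(2n)) *)
apply: le_trans (Pr_deviation_le (th := (delta - (2 * n%:R)^-1) / (2 * s)) delta t12 _
  (weighted_load0_near_avg x0K t12 smooth)) _.
  by rewrite divr_ge0 ?mulr_ge0 ?ltW.
rewrite -/s (_ : _ - _ = - (delta - (2 * n%:R)^-1) ^+ 2 / (4 * s)) //.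
by field; rewrite !gt_eqF.
Qed.

End Concentration.

Lemma load_deviation_tail (R : realType) n (Ms : nat -> 'I_n -> 'I_n) x0 (K : R) t1
    (w : 'I_n) (delta : R) :
  (forall t, (0 < t)%N -> involutive (Ms t)) ->
  discr (\row_u ((x0 u)%:~R : R)) <= K -> smoothing Ms 0 t1 K (2 * n%:R)^-1 ->
  n%:R^-1 < delta ->
  Pr R [pred om : Omega n t1 |
        delta <= `|(load Ms x0 (bits_of om) t1 w)%:~R - avg_load R x0|]
  <= 2 * expR (- (delta - (2 * n%:R)^-1) ^+ 2 / 4).
Proof.
move=> MsK x0K smooth delta_gt.
have n_ge1 : (1 <= n%:R :> R) by rewrite ler1n (leq_ltn_trans _ (ltn_ord w)).
have id_weight v : weight R Ms t1 w t1 v = (w == v)%:R.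
  by rewrite /weight /match_prod big_geq // mxE eq_sym.
have wloadE (om : Omega n t1) :
    weighted_load R Ms x0 t1 w om = (load Ms x0 (bits_of om) t1 w)%:~R.
  by rewrite /weighted_load; under eq_bigr do rewrite id_weight mulrC; rewrite sum_eq_mul.
have sqdevE : sqdev (weight R Ms t1 w t1) = 1 - n%:R^-1.
  rewrite /sqdev; under eq_bigr do rewrite id_weight.
  transitivity (\sum_v ((w == v)%:R * (1 - 2 * n%:R^-1) + n%:R^-1 ^+ 2 : R)).
    by apply: eq_bigr => v _; case: (w == v); rewrite /=; ring.
  rewrite big_split /= sum_eq_mul sumr_const card_ord -mulr_natr.
  by field; rewrite gt_eqF // (lt_le_trans ltr01).
have -> : Pr R [pred om : Omega n t1 |
                 delta <= `|(load Ms x0 (bits_of om) t1 w)%:~R - avg_load R x0|]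
        = Pr R [pred om : Omega n t1 |
                 delta <= `|weighted_load R Ms x0 t1 w om - avg_load R x0|].
  by rewrite /Pr; congr (_%:R / _); apply: eq_card => om; rewrite !inE wloadE.
apply: le_trans (deviation_tail w MsK x0K (leqnn t1) smooth delta_gt) _.
rewrite sqdevE; case: ifP => [_|/negbT D_neq0].
  by rewrite mulr_ge0 ?expR_ge0.
have ninv_le1 : n%:R^-1 <= 1 :> R by rewrite invf_le1 // (lt_le_trans ltr01).
rewrite ler_pM2l // ler_expR !mulNr lerN2 ler_wpM2l ?sqr_ge0 // lef_pV2 ?posrE //.
- have : 0 <= n%:R^-1 :> R by rewrite invr_ge0 ler0n.
  lra.
- by rewrite lt_neqAle eq_sym D_neq0 mulr_ge0 // subr_ge0.
Qed.

Unset Implicit Arguments.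
Set Strict Implicit.

Theorem lemma2p13 (R : realType) (n : nat) (e : rel 'I_n)
    (Ms : nat -> 'I_n -> 'I_n) (x0 : 'I_n -> int) (K : R) (t1 t2 : nat) :
  simple_graph e ->
  (forall t, (0 < t)%N -> is_matching e (Ms t)) ->
  discr (\row_u ((x0 u)%:~R : R)) <= K ->
  (t1 <= t2)%N ->
  smoothing Ms 0 t1 K (2 * n%:R)^-1 ->
  (forall (k : 'I_n) (delta : R), n%:R^-1 < delta ->
     let M := match_prod R Ms t1.+1 t2 in
     let D := 4 * \sum_(w < n) (M w k - n%:R^-1) ^+ 2 in
     Pr R [pred om : Omega n t1 |
           delta <= `|\sum_(w < n) (load Ms x0 (bits_of om) t1 w)%:~R * M w k
                      - avg_load R x0|]
     <= (if D == 0 then 0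
         else 2 * expR (- (delta - (2 * n%:R)^-1) ^+ 2 / D))) /\
  (forall (w : 'I_n) (delta : R), n%:R^-1 < delta ->
     Pr R [pred om : Omega n t1 |
           delta <= `|(load Ms x0 (bits_of om) t1 w)%:~R - avg_load R x0|]
     <= 2 * expR (- (delta - (2 * n%:R)^-1) ^+ 2 / 4)).
Proof.
move=> _ matchings x0K t12 smooth.
have MsK t : (0 < t)%N -> involutive (Ms t) by move=> /matchings[].
split=> [k delta delta_gt | w delta delta_gt].
- exact (deviation_tail k MsK x0K t12 smooth delta_gt).
- exact (load_deviation_tail w MsK x0K smooth delta_gt).
Qed.
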